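(* Let $G$ be a graph, $\mathcal H$ a non-piercing family of subgraphs of $G$, and $(T,\{B_z\}_{z\in V(T)})$ a tree decomposition of $G$ with $T$ rooted. Let $\{x,y\}\in E(T)$ with $x$ a child of $y$, and let $A=A_{xy}=B_x\cap B_y$. Let $H,H'\in\mathcal H$ with $V(H)\cap A\ne\emptyset\ne V(H')\cap A$. Then: (i) if $H\cap A=H'\cap A$ and $H|_x\subsetneq H'|_x$, then $H'|_{-x}\subseteq H|_{-x}$; (ii) if $H\cap A=H'\cap A$ and $H|_x, H'|_x$ properly intersect, then $H|_{-x}=H'|_{-x}$; (iii) if $H\cap A\subsetneq H'\cap A$ and $H|_x,H'|_x$ properly intersect, then $H|_{-x}\subseteq H'|_{-x}$.
   Context: All graphs are finite and simple. A subgraph $H$ of a graph $G$ is identified with its vertex set $V(H)$ (subgraphs are taken to be induced). A family $\mathcal H$ of subgraphs of $G$ is non-piercing if every $H\in\mathcal H$ induces a connected subgraph of $G$ and, for all $H,H'\in\mathcal H$, the induced subgraph $G[V(H)\setminus V(H')]$ is connected (an empty vertex set is regarded as connected). For a node $x$ of the rooted tree $T$, $T_x$ is the subtree rooted at $x$, $G_x$ is the subgraph of $G$ induced on $\bigcup_{z\in V(T_x)}B_z$, and $G_{-x}$ is the subgraph induced on $V(G)\setminus V(G_x)$. For a subgraph $H$, $H|_x=V(H)\cap V(G_x)$ and $H|_{-x}=V(H)\cap V(G_{-x})$. Two sets $X,Y$ properly intersect if $X\setminus Y\ne\emptyset$ and $Y\setminus X\ne\emptyset$. *)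

From mathcomp Require Import all_boot.
Set Implicit Arguments. Unset Strict Implicit. Unset Printing Implicit Defensive.

Section Defs.

Definition simple_graph (V : finType) (e : rel V) : Prop :=
  symmetric e /\ irreflexive e.

(* The induced subgraph G[S] is connected (the empty set counts as connected). *)
Definition induced_rel (V : finType) (e : rel V) (S : {set V}) : rel V :=
  [rel a b | [&& e a b, a \in S & b \in S]].

Definition connected_in (V : finType) (e : rel V) (S : {set V}) : Prop :=
  forall u v, u \in S -> v \in S -> connect (induced_rel e S) u v.

Definition acyclic (T : finType) (t : rel T) : Prop :=
  forall c : seq T, uniq c -> 3 <= size c -> ~~ cycle t c.

(* A (finite) tree: a connected acyclic simple graph (nonempty since rooted below). *)
Definition is_tree (T : finType) (t : rel T) : Prop :=
  simple_graph t /\ connected_in t [set: T] /\ acyclic t.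

Definition tree_decomposition (V T : finType) (e : rel V) (t : rel T)
    (B : T -> {set V}) : Prop :=
  [/\ is_tree t,
      (forall v : V, exists z : T, v \in B z),
      (forall u v : V, e u v -> exists z : T, (u \in B z) && (v \in B z))
    & (forall v : V, connected_in t [set z | v \in B z])].

Definition del_edge (T : finType) (t : rel T) (x y : T) : rel T :=
  [rel a b | t a b && ~~ (((a == x) && (b == y)) || ((a == y) && (b == x)))].

Definition child_of (T : finType) (t : rel T) (r x y : T) : Prop :=
  t x y /\ ~~ connect (del_edge t x y) x r.

(* Node set of the subtree T_x rooted at x (x a child of y): the component of
   x in T minus the edge {x,y}, i.e. x and all its descendants. *)
Definition subtree (T : finType) (t : rel T) (x y : T) : {set T} :=
  [set z | connect (del_edge t x y) x z].

Definition Gx (V T : finType) (t : rel T) (B : T -> {set V}) (x y : T) : {set V} :=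
  \bigcup_(z in subtree t x y) B z.

Definition Gmx (V T : finType) (t : rel T) (B : T -> {set V}) (x y : T) : {set V} :=
  ~: Gx t B x y.

Definition non_piercing (V : finType) (e : rel V) (calH : {set {set V}}) : Prop :=
  (forall H, H \in calH -> connected_in e H) /\
  (forall H H', H \in calH -> H' \in calH -> connected_in e (H :\: H')).

Definition properly_intersect (V : finType) (X Y : {set V}) : bool :=
  (X :\: Y != set0) && (Y :\: X != set0).

End Defs.

From mathcomp Require Import all_boot.
Set Implicit Arguments. Unset Strict Implicit.

(* Every edge of G leaving V(G_x) starts in the adhesion A = B_x ∩ B_y: the bags
   containing both ends of the edge form, together with a bag of the subtree
   containing the inner end, a connected piece of T that must cross the edge
   {x,y}.  Hence a connected set disjoint from A that meets G_x stays inside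
   G_x.  Applied to H \ H', which is connected by non-piercing, this says: if
   H ∩ A ⊆ H' and H gains a vertex over H' inside G_x, then H ⊆ H' outside G_x;
   each claim is an instance of this, for H and H' in a suitable order. *)

Lemma connect_exit (T : finType) (r : rel T) (P : pred T) u v :
  connect r u v -> P u -> ~~ P v -> exists a b, [/\ r a b, P a & ~~ P b].
Proof.
move/connectP=> [p]; elim: p u => [|w p IH] u /=.
  by move=> _ -> Pu; rewrite Pu.
move=> /andP[ruw pw] ev Pu nPv.
case Pw: (P w); first exact: (IH w pw ev Pw nPv).
by exists u, w; rewrite ruw Pu Pw.
Qed.

Section Adhesion.

Variables (V T : finType) (e : rel V) (t : rel T) (B : T -> {set V}) (x y : T).
Hypothesis TD : tree_decomposition e t B.

Local Notation A := (B x :&: B y).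
Local Notation G_x := (Gx t B x y).
Local Notation G_mx := (Gmx t B x y).

Lemma edge_leaving_Gx_in_adhesion a b :
  e a b -> a \in G_x -> b \notin G_x -> a \in A.
Proof.
case: TD => _ _ edge_bag bags_connected eab /bigcupP[z' z'S az'] bG.
have [z /andP[az bz]] := edge_bag a b eab.
have zS : z \notin subtree t x y.
  by apply: contra bG => zS; apply/bigcupP; exists z.
have := bags_connected a z' z; rewrite !inE => /(_ az' az) z'z.
have [c [d [/and3P[tcd ac ad] cS dS]]] :=
  connect_exit (P := mem (subtree t x y)) z'z z'S zS.
rewrite !inE in ac ad cS dS.
case E: (((c == x) && (d == y)) || ((c == y) && (d == x))).
  by case/orP: E => /andP[/eqP ? /eqP ?]; subst; rewrite ?inE ac ad.
case/negP: dS; apply: connect_trans cS (connect1 _).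
by rewrite /del_edge /= tcd E.
Qed.

Lemma connected_disjoint_adhesion_sub_Gx (D : {set V}) :
  connected_in e D -> D :&: A = set0 -> D :&: G_x != set0 -> D \subset G_x.
Proof.
move=> cD DA /set0Pn[u /setIP[uD uG]]; apply/subsetP=> v vD.
apply/negPn/negP=> vG.
have [a [b [/and3P[eab aD _] aG bG]]] :=
  connect_exit (P := mem G_x) (cD u v uD vD) uG vG.
have aA := edge_leaving_Gx_in_adhesion eab aG bG.
by move/eqP: DA; apply/negP/set0Pn; exists a; rewrite inE aD.
Qed.

Lemma nonpiercing_sub_outside (calH : {set {set V}}) (K K' : {set V}) :
  non_piercing e calH -> K \in calH -> K' \in calH ->
  K :&: A \subset K' -> ~~ (K :&: G_x \subset K' :&: G_x) ->
  K :&: G_mx \subset K' :&: G_mx.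
Proof.
move=> [_ diff_connected] HK HK' KA KGx.
have D_Gx : K :\: K' \subset G_x.
  apply: connected_disjoint_adhesion_sub_Gx; first exact: diff_connected.
    apply/setP=> a; rewrite [a \in set0]inE; apply/negbTE/negP.
    by move=> /setIP[/setDP[aK /negP aK'] aA]; apply/aK'/(subsetP KA); rewrite inE aK.
  apply/set0Pn; move/subsetPn: KGx => [w /setIP[wK wG]].
  by rewrite inE wG andbT => wK'; exists w; rewrite !inE wK wK' wG.
apply/subsetP=> v /setIP[vK vG]; rewrite inE vG andbT.
apply/negPn/negP=> vK'; move: vG; rewrite inE.
by move/subsetP: D_Gx => /(_ v); rewrite inE vK vK' => /(_ isT) ->.
Qed.

End Adhesion.

Theorem mainTheorem8 (V T : finType) (e : rel V) (t : rel T) (B : T -> {set V})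
    (r : T) (calH : {set {set V}}) (x y : T) (H H' : {set V}) :
  simple_graph e ->
  non_piercing e calH ->
  tree_decomposition e t B ->
  child_of t r x y ->
  H \in calH -> H' \in calH ->
  H :&: (B x :&: B y) != set0 ->
  H' :&: (B x :&: B y) != set0 ->
  let A := B x :&: B y in
  let Hx := H :&: Gx t B x y in
  let H'x := H' :&: Gx t B x y in
  let Hmx := H :&: Gmx t B x y in
  let H'mx := H' :&: Gmx t B x y in
  [/\ (H :&: A = H' :&: A -> Hx \proper H'x -> H'mx \subset Hmx),
      (H :&: A = H' :&: A -> properly_intersect Hx H'x -> Hmx = H'mx)
    & (H :&: A \proper H' :&: A -> properly_intersect Hx H'x -> Hmx \subset H'mx)].
Proof.
move=> _ NP TD _ HH HH' _ _ A Hx H'x Hmx H'mx.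
have outside := nonpiercing_sub_outside TD (x := x) (y := y) NP.
have HA_H' : H :&: A = H' :&: A -> H :&: A \subset H'.
  by move=> ->; apply: subsetIl.
have H'A_H : H :&: A = H' :&: A -> H' :&: A \subset H.
  by move=> <-; apply: subsetIl.
split.
- move=> E; rewrite properE => /andP[_ H'xHx].
  exact: outside HH' HH (H'A_H E) H'xHx.
- move=> E; rewrite /properly_intersect !setD_eq0 => /andP[HxH'x H'xHx].
  apply/eqP; rewrite eqEsubset.
  by rewrite (outside _ _ HH HH' (HA_H' E) HxH'x) (outside _ _ HH' HH (H'A_H E) H'xHx).
- rewrite properE => /andP[HAH'A _] /andP[]; rewrite setD_eq0 => HxH'x _.
  exact: outside HH HH' (subset_trans HAH'A (subsetIl _ _)) HxH'x.
Qed.
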